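(* Let $(S,+)$ be an infinite left weakly cancellative semigroup with no idempotent element, and let $A\subseteq S$ be an IP set. Then there is a family $\{A_\alpha:\alpha<2^\omega\}$ of subsets of $A$ such that each $A_\alpha$ is an infinite IP set and $A_\alpha\cap A_\beta$ is finite whenever $\alpha<\beta<2^\omega$.
   Context: $S$ is left weakly cancellative if for all $a,b\in S$ the set $\{x: a+x=b\}$ is finite; $e$ is idempotent if $e+e=e$. For a sequence $\langle x_n\rangle_{n=1}^\infty$ in $S$, $\mathrm{FS}(\langle x_n\rangle_{n=1}^\infty)$ is the set of all sums $\sum_{n\in H}x_n$ (in increasing order of indices) with $H$ a nonempty finite subset of $\mathbb{N}$. $A$ is an IP set if $\mathrm{FS}(\langle x_n\rangle_{n=1}^\infty)\subseteq A$ for some sequence $\langle x_n\rangle_{n=1}^\infty$ in $S$. *)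

From mathcomp Require Import all_boot.
From mathcomp Require Import boolp classical_sets cardinality.
Set Implicit Arguments. Unset Strict Implicit. Unset Printing Implicit Defensive.
Local Open Scope classical_set_scope.

Definition associative_op (S : Type) (op : S -> S -> S) : Prop :=
  forall a b c, op a (op b c) = op (op a b) c.

Definition left_weakly_cancellative (S : Type) (op : S -> S -> S) : Prop :=
  forall a b : S, finite_set [set x | op a x = b].

Definition idempotent_elt (S : Type) (op : S -> S -> S) (e : S) : Prop :=
  op e e = e.

Definition seq_sum (S : Type) (op : S -> S -> S) (x : nat -> S)
  (h : nat) (t : seq nat) : S :=
  foldl (fun acc i => op acc (x i)) (x h) t.

(* FS(<x_n>): sums over nonempty finite H ⊆ ℕ in increasing order of indices;
   H is encoded as the strictly increasing list h :: t of its elements. *)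
Definition FS (S : Type) (op : S -> S -> S) (x : nat -> S) : set S :=
  [set s | exists (h : nat) (t : seq nat),
      sorted ltn (h :: t) /\ s = seq_sum op x h t].

Definition IP_set (S : Type) (op : S -> S -> S) (A : set S) : Prop :=
  exists x : nat -> S, FS op x `<=` A.

From mathcomp Require Import all_boot.
From mathcomp Require Import boolp classical_sets cardinality.
From mathcomp Require Import zify.
Set Implicit Arguments. Unset Strict Implicit. Unset Printing Implicit Defensive.
Local Open Scope classical_set_scope.

(* Let FS(x) be contained in A.  Left weak cancellation and the absence of
   idempotents imply that, for every start k, some block sum
   x_k + ... + x_(k+l) avoids any prescribed finite set: if all of them lay in
   a finite set, two would coincide, v = v + w, hence v = v + n w for all n,
   so the multiples of w would repeat and produce an idempotent.  Hence one can
   pick consecutive disjoint blocks w_0, w_1, ... of x such that neither w_n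
   nor any s + w_n, with s a finite sum of w_0, ..., w_(n-1), is such a finite
   sum; then every finite sum of the w's determines its largest index.
   Sending a : nat -> bool to the strictly increasing sequence
   n |-> 2^n + sum_(i<n) a_i 2^i, the sets FS(w o code a) are infinite IP
   subsets of A, and a common element of two of them only involves indices
   below the first place where a and b differ, so there are finitely many. *)

Lemma injective_infinite_range T (f : nat -> T) (B : set T) :
  injective f -> (forall n, B (f n)) -> infinite_set B.
Proof.
move=> f_inj fB finB; apply: infinite_nat.
have : finite_set (f @` setT) by apply: sub_finite_set finB => _ [n _ <-].
by rewrite (eq_finite_set (inj_card_eq _)) // => m n _ _ /f_inj.
Qed.

Lemma finite_range_not_injective T (f : nat -> T) (B : set T) :
  finite_set B -> (forall n, B (f n)) -> exists i j, i < j /\ f i = f j.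
Proof.
move=> finB fB; apply: contrapT => f_inj.
apply: (injective_infinite_range _ fB) finB => m n fmn.
by case: (ltngtP m n) => // [mn|nm]; exfalso; apply: f_inj; [exists m, n | exists n, m].
Qed.

Lemma last_iota k n : last k (iota k.+1 n) = k + n.
Proof. by elim: n k => [|n IH] k /=; rewrite ?addn0 // IH addnS. Qed.

Lemma last_max h t : sorted ltn (h :: t) -> {in h :: t, forall i, i <= last h t}.
Proof.
elim: t h => [|j t IH] h /=; first by move=> _ i; rewrite inE => /eqP->.
case/andP=> hj jt i; rewrite inE => /orP[/eqP->|]; last exact: IH.
by have := IH j jt j (mem_head _ _); lia.
Qed.

Section Semigroup.

Variables (S : Type) (op : S -> S -> S).
Hypothesis opA : associative_op op.

Lemma foldl_opl (f : nat -> S) a b t :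
  foldl (fun acc i => op acc (f i)) (op a b) t =
  op a (foldl (fun acc i => op acc (f i)) b t).
Proof. by elim: t b => //= i t IH b; rewrite -opA IH. Qed.

Lemma seq_sum_cat (f : nat -> S) h t j u :
  seq_sum op f h (t ++ j :: u) = op (seq_sum op f h t) (seq_sum op f j u).
Proof. by rewrite /seq_sum foldl_cat /= foldl_opl. Qed.

Lemma seq_sum_rcons (f : nat -> S) h t n :
  seq_sum op f h (rcons t n) = op (seq_sum op f h t) (f n).
Proof. by rewrite /seq_sum foldl_rcons. Qed.

Lemma seq_sum_map (f : nat -> S) (c : nat -> nat) h t :
  seq_sum op (f \o c) h t = seq_sum op f (c h) (map c t).
Proof. by rewrite /seq_sum /comp; elim: t (f (c h)) => //= i t IH a; rewrite IH. Qed.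

Lemma eq_seq_sum (f g : nat -> S) h t :
  {in h :: t, f =1 g} -> seq_sum op f h t = seq_sum op g h t.
Proof.
rewrite /seq_sum => fg; rewrite fg ?mem_head //.
have {fg} : {in t, f =1 g} by move=> i it; apply: fg; rewrite inE it orbT.
elim: t (g h) => //= i t IH a fg; rewrite fg ?mem_head // IH // => j jt.
by apply: fg; rewrite inE jt orbT.
Qed.

Lemma FS_subseq (x : nat -> S) (c : nat -> nat) :
  {homo c : i j / i < j} -> FS op (x \o c) `<=` FS op x.
Proof.
move=> c_incr _ [h [t [ht ->]]]; exists (c h), (map c t).
by rewrite seq_sum_map; split => //; exact: homo_path ht.
Qed.

(* [succ_mul w n] is the (n+1)-fold sum w + ... + w. *)
Fixpoint succ_mul (w : S) n := if n is m.+1 then op (succ_mul w m) w else w.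

Lemma succ_mulD w m n : op (succ_mul w m) (succ_mul w n) = succ_mul w (m + n).+1.
Proof. by elim: n => [|n IH] /=; rewrite ?addn0 // opA IH addnS. Qed.

Lemma idempotent_of_succ_mul_eq w i j :
  i < j -> succ_mul w i = succ_mul w j -> exists e, idempotent_elt op e.
Proof.
move=> ij; have {ij} [p ->] : exists p, j = i + p.+1 by exists (j - i).-1; lia.
move=> wij.
have period k : succ_mul w (i + k + p.+1) = succ_mul w (i + k).
  elim: k => [|k IH]; first by rewrite addn0 -wij.
  by rewrite (addnS i k) addSn /= IH.
have periods q k : succ_mul w (i + k + q * p.+1) = succ_mul w (i + k).
  by elim: q => [|q IH]; rewrite ?addn0 // mulSnr addnA -(addnA i) period addnA IH.
(* e is the sum of (i+1)(p+1) copies of w, a multiple of the period beyond i *)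
exists (succ_mul w (i + (i * p + p))).
rewrite /idempotent_elt succ_mulD -[RHS](periods i.+1).
by congr succ_mul; rewrite !mulSn !mulnS; lia.
Qed.

Definition block_sum (x : nat -> S) k l := seq_sum op x k (iota k.+1 l).

Lemma block_sumD x k l1 l2 :
  block_sum x k (l1 + l2).+1 = op (block_sum x k l1) (block_sum x (k + l1).+1 l2).
Proof. by rewrite /block_sum -addnS iotaD -seq_sum_cat // addSn. Qed.

Section Blocks.

Variables (x : nat -> S) (s l : nat -> nat).
Hypothesis blocks_disjoint : forall m, s m + l m < s m.+1.

Lemma seq_sum_blocks h t : sorted ltn (h :: t) ->
  exists t', [/\ sorted ltn (s h :: t'), last (s h) t' = s (last h t) + l (last h t)
    & seq_sum op (fun m => block_sum x (s m) (l m)) h t = seq_sum op x (s h) t'].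
Proof.
have s_mono : {homo s : m n / m <= n}.
  by apply: homo_leq => [//|m n p|m]; [exact: leq_trans | have := blocks_disjoint m; lia].
have blocks_lt m n : m < n -> s m + l m < s n.
  by move=> mn; apply: leq_trans (blocks_disjoint m) (s_mono _ _ mn).
elim/last_ind: t => [|t j IH].
  by exists (iota (s h).+1 (l h)); rewrite last_iota (iota_ltn_sorted _ (l h).+1).
rewrite /= rcons_path => /andP[ht lj]; have [/= t' [ht' lt' sum_t']] := IH ht.
exists (t' ++ s j :: iota (s j).+1 (l j)); split.
- rewrite /= cat_path ht' /= lt' blocks_lt //.
  exact: (iota_ltn_sorted (s j) (l j).+1).
- by rewrite last_cat /= last_iota last_rcons.
- by rewrite seq_sum_rcons sum_t' seq_sum_cat.
Qed.

Lemma FS_block_sums_sub : FS op (fun m => block_sum x (s m) (l m)) `<=` FS op x.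
Proof.
move=> _ [h [t [ht ->]]]; have [t' [ht' _ ->]] := seq_sum_blocks ht.
by exists (s h), t'.
Qed.

End Blocks.

Definition FS_below (f : nat -> S) n : set S :=
  [set s | exists h t, [/\ sorted ltn (h :: t), last h t < n & s = seq_sum op f h t]].

Lemma FS_below_succ f n :
  FS_below f n.+1 `<=` FS_below f n `|` [set f n] `|` (op^~ (f n)) @` FS_below f n.
Proof.
move=> _ [h [t [ht tn ->]]].
have [lt_n|ge_n] := ltnP (last h t) n; first by left; left; exists h, t.
have {tn ge_n} : last h t = n by lia.
case/lastP: t ht => [_ /= ->|t j]; first by left; right.
rewrite /= rcons_path last_rcons => /andP[ht tj] <-.
by right; exists (seq_sum op f h t); [exists h, t | rewrite seq_sum_rcons].
Qed.

Lemma FS_below_finite f n : finite_set (FS_below f n).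
Proof.
elim: n => [|n IH].
  by apply: sub_finite_set (finite_set0 S) => ? [h [t [_ /[!ltn0]]]].
apply: sub_finite_set (@FS_below_succ f n) _.
by rewrite !finite_setU; split; [split; [|exact: finite_set1] | exact: finite_image].
Qed.

Lemma eq_FS_below f g n : {in gtn n, f =1 g} -> FS_below f n = FS_below g n.
Proof.
move=> fg; apply/seteqP; split=> _ [h [t [ht tn ->]]]; exists h, t; split => //;
  apply: eq_seq_sum => i it; [|symmetry]; apply: fg;
  by rewrite inE; have := last_max ht it; lia.
Qed.

Definition fresh (B : set S) (s : S) := ~ B s /\ forall a, B a -> ~ B (op a s).

Section Fresh.

Variable w : nat -> S.
Hypothesis w_fresh : forall n, fresh (FS_below w n) (w n).

Lemma seq_sum_notin_FS_below h t :
  sorted ltn (h :: t) -> ~ FS_below w (last h t) (seq_sum op w h t).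
Proof.
have [w_notin w_shift] := w_fresh (last h t).
case/lastP: t w_notin w_shift => [//|t j] _; rewrite last_rcons => w_shift.
rewrite /= rcons_path seq_sum_rcons => /andP[ht tj].
by apply: w_shift; exists h, t.
Qed.

Lemma seq_sum_last_inj h t h' t' :
  sorted ltn (h :: t) -> sorted ltn (h' :: t') ->
  seq_sum op w h t = seq_sum op w h' t' -> last h t = last h' t'.
Proof.
move=> ht ht' sum_eq; case: (ltngtP (last h t) (last h' t')) => // lt_last; exfalso.
- by apply: (seq_sum_notin_FS_below ht'); rewrite -sum_eq; exists h, t.
- by apply: (seq_sum_notin_FS_below ht); rewrite sum_eq; exists h', t'.
Qed.

Lemma FS_infinite (c : nat -> nat) : injective c -> infinite_set (FS op (w \o c)).
Proof.
move=> c_inj; apply: (injective_infinite_range (f := w \o c)); last first.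
  by move=> n; exists n, [::].
by move=> m n /(@seq_sum_last_inj (c m) [::] (c n) [::] erefl erefl) /c_inj.
Qed.

Lemma FS_inter_sub_FS_below (c d : nat -> nat) n :
  {homo c : i j / i < j} -> {homo d : i j / i < j} ->
  (forall m m', c m = d m' -> m < n) ->
  FS op (w \o c) `&` FS op (w \o d) `<=` FS_below (w \o c) n.
Proof.
move=> c_incr d_incr cd_small _ [[h [t [ht ->]]] [h' [t' [ht' sum_eq]]]].
exists h, t; split => //; apply: (cd_small _ (last h' t')).
move: sum_eq; rewrite (seq_sum_map w c) (seq_sum_map w d) => /seq_sum_last_inj.
rewrite !last_map; apply; [exact: homo_path c_incr ht | exact: homo_path d_incr ht'].
Qed.

End Fresh.

Section NoIdempotent.

Hypothesis op_lwc : left_weakly_cancellative op.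
Hypothesis no_idempotent : forall e : S, ~ idempotent_elt op e.

Lemma exists_block_sum_notin x k (Bad : set S) :
  finite_set Bad -> exists l, ~ Bad (block_sum x k l).
Proof.
move=> finBad; apply: contrapT => no_l.
have all_bad l : Bad (block_sum x k l) by apply: contrapT => ?; apply: no_l; exists l.
have [l1 [l2 [l12 v_eq]]] := finite_range_not_injective finBad all_bad.
set v := block_sum x k l1 in v_eq.
set w := block_sum x (k + l1).+1 (l2 - l1).-1.
have vw : op v w = v by rewrite [RHS]v_eq -block_sumD; congr block_sum; lia.
have v_absorbs m : op v (succ_mul w m) = v by elim: m => [|m IH] //=; rewrite opA IH vw.
have [i [j [ij w_ij]]] := finite_range_not_injective (op_lwc v v) v_absorbs.
by have [e] := idempotent_of_succ_mul_eq ij w_ij; exact: no_idempotent.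
Qed.

Lemma exists_fresh_block_sum x (B : set S) k :
  finite_set B -> exists l, fresh B (block_sum x k l).
Proof.
move=> finB.
pose Bad := B `|` \bigcup_(a in B) \bigcup_(b in B) [set c | op a c = b].
have finBad : finite_set Bad.
  rewrite finite_setU; split => //.
  by apply: bigcup_finite => // a _; apply: bigcup_finite => // b _; exact: op_lwc.
have [l notBad] := exists_block_sum_notin x k finBad.
exists l; split=> [Bl|a Ba Bal]; apply: notBad; first by left.
by right; exists a => //; exists (op a (block_sum x k l)).
Qed.

Section Construction.

Variable x : nat -> S.

Let next_len (f : nat -> S) n k : nat :=
  sval (cid (exists_fresh_block_sum x k (FS_below_finite f n))).

(* [stage n] is the start of the next block together with a function agreeing
   with the blocks chosen so far on indices below n. *)
Fixpoint stage n : nat * (nat -> S) :=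
  if n is m.+1 then
    let k := (stage m).1 in let l := next_len (stage m).2 m k in
    ((k + l).+1, fun i => if i == m then block_sum x k l else (stage m).2 i)
  else (0, fun _ => x 0).

Let start n := (stage n).1.
Let len n := next_len (stage n).2 n (start n).
Let block n := block_sum x (start n) (len n).

Lemma stage_block m i : i < m -> (stage m).2 i = block i.
Proof. by elim: m => [|m IH] //= im; case: eqP => [->|ne] //; apply: IH; lia. Qed.

Lemma exists_fresh_subsums :
  exists w, FS op w `<=` FS op x /\ forall n, fresh (FS_below w n) (w n).
Proof.
exists block; split; first by apply: FS_block_sums_sub => m; exact: ltnSn.
move=> n; rewrite -(@eq_FS_below (stage n).2) => [|i]; last by rewrite inE => /stage_block.
exact: svalP (cid (exists_fresh_block_sum x (start n) (FS_below_finite (stage n).2 n))).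
Qed.

End Construction.

End NoIdempotent.

End Semigroup.

Fixpoint bits (a : nat -> bool) n := if n is m.+1 then bits a m + a m * 2 ^ m else 0.

Definition code (a : nat -> bool) n := 2 ^ n + bits a n.

Lemma bits_lt a n : bits a n < 2 ^ n.
Proof. by elim: n => [|n IH] //=; rewrite expnS; case: (a n) => /=; lia. Qed.

Lemma code_increasing a : {homo code a : i j / i < j}.
Proof.
apply: homo_ltn => [i j k|n]; first lia.
by rewrite /code /= expnS; have := bits_lt a n; lia.
Qed.

Lemma bits_inj a b n : bits a n = bits b n -> {in gtn n, a =1 b}.
Proof.
elim: n => [|n IH] //= abits i.
have ha := bits_lt a n; have hb := bits_lt b n.
have abn : a n = b n by case: (a n) (b n) abits => [] [] /=; lia.
rewrite abn in abits; rewrite inE ltnS leq_eqVlt => /orP[/eqP-> //|ltin].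
by apply: IH; rewrite ?inE //; lia.
Qed.

Lemma code_inj a b n m : code a n = code b m -> n = m /\ {in gtn n, a =1 b}.
Proof.
have code_lt a' b' n' m' : n' < m' -> code a' n' < code b' m'.
  move=> nm; rewrite /code; have := bits_lt a' n'.
  have : 2 ^ n'.+1 <= 2 ^ m' by rewrite leq_exp2l.
  by rewrite expnS; lia.
move=> ab; case: (ltngtP n m) => [nm|mn|nm]; last subst m.
- by have := code_lt a b _ _ nm; rewrite ab ltnn.
- by have := code_lt b a _ _ mn; rewrite ab ltnn.
by split => //; apply: bits_inj; move: ab; rewrite /code; lia.
Qed.

Theorem theorem2p5 (S : Type) (op : S -> S -> S)
  (Hassoc : associative_op op)
  (Hinf : infinite_set [set: S])
  (Hlwc : left_weakly_cancellative op)
  (Hnoid : forall e : S, ~ idempotent_elt op e)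
  (A : set S) (HA : IP_set op A) :
  exists F : (nat -> bool) -> set S,
    (forall a, F a `<=` A /\ infinite_set (F a) /\ IP_set op (F a)) /\
    (forall a b, a <> b -> finite_set (F a `&` F b)).
Proof.
have [x FSx_A] := HA.
have [w [FSw_FSx w_fresh]] := exists_fresh_subsums Hassoc Hlwc Hnoid x.
exists (fun a => FS op (w \o code a)); split=> [a|a b ab].
  split; [|split; last by exists (w \o code a)].
  - exact: subset_trans (FS_subseq (code_increasing a)) (subset_trans FSw_FSx FSx_A).
  - by apply: (FS_infinite w_fresh) => m n /code_inj[].
have [i ab_i] : exists i, a i <> b i.
  by apply/existsNP => ab_eq; apply: ab; apply/funext => i; exact: contrapT.
apply: sub_finite_set (FS_below_finite op (w \o code a) i.+1).
apply: (FS_inter_sub_FS_below w_fresh (code_increasing a) (code_increasing b)).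
move=> m m' /code_inj[_ ab_agree]; rewrite ltnS leqNgt; apply/negP => im.
by apply: ab_i; apply: ab_agree; rewrite inE.
Qed.
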